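(* For any $z\ge1$, $$\mathcal{E}^{\mathrm{TW}}_{m,1}\le 2z^{-\nu}\,\mathcal{K}(z),\qquad \nu=\lceil n/2\rceil.$$
   Context: $m$-twist system with parameter $\rho\in(0,1/2]$ on $n$ agents: at each time $t$ the agents are relabeled so that their positions satisfy $x_1\le\dots\le x_n$. A partition of $[n]$ into at most $m$ intervals of consecutive indices $[u_{t,l},v_{t,l}]$ (blocks) is given. The next sorted positions $y_1\le\dots\le y_n$ satisfy, for every block $[u,v]$ and $i\in[u,v]$, $$(1-\rho)x_u+\rho x_{\min\{i+1,v\}}\le y_i\le\rho x_{\max\{i-1,u\}}+(1-\rho)x_v.$$ Definitions: - The $1$-energy is $\sum_t\sum_l(x_{v_{t,l}}(t)-x_{u_{t,l}}(t))$. - $\mathcal{E}^{\mathrm{TW}}_{m,1}$ is its supremum over all $m$-twist systems with initial positions in $[0,1]$. - For $k\in[n]$, let $v(k)$ (resp. $u(k)$) be the right (resp. left) endpoint of the block containing $k$ at time $t$. - $K_t(z)=\sum_{k=1}^n(x_{v(k)}(t)-x_k(t))z^k$, and $K(z)=\sum_{t\ge0}K_t(z)$. - $\mathcal{K}(z)$ is the supremum of $K(z)$ over all $m$-twist systems with initial positions in $[0,1]$. *)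

From HB Require Import structures.
From mathcomp Require Import all_boot all_order all_algebra.
From mathcomp Require Import all_classical all_reals all_analysis.
Set Implicit Arguments. Unset Strict Implicit. Unset Printing Implicit Defensive.
Import Order.TTheory GRing.Theory Num.Theory.
Local Open Scope ring_scope.

(* Agents are indexed 0..n-1 (agent k of the paper is index k-1). *)
Definition interval_partition (n : nat) (s : seq (nat * nat)) : bool :=
  all (fun b => b.1 <= b.2)%N s &&
  (flatten [seq iota b.1 (b.2.+1 - b.1) | b <- s] == iota 0 n).

Definition blk (s : seq (nat * nat)) (k : nat) : nat * nat :=
  nth (0%N, 0%N) s (find (fun b => (b.1 <= k <= b.2)%N) s).
Definition ublk (s : seq (nat * nat)) (k : nat) : nat := (blk s k).1.
Definition vblk (s : seq (nat * nat)) (k : nat) : nat := (blk s k).2.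

(* An m-twist system with parameter rho on n agents:
   pos t i = i-th smallest position at time t (sorted positions),
   part t  = the block partition at time t (at most m blocks). *)
Record twist_system (R : realType) (n m : nat) (rho : R) := TwistSystem {
  pos : nat -> nat -> R;
  part : nat -> seq (nat * nat);
  pos_sorted : forall t i, (i.+1 < n)%N -> pos t i <= pos t i.+1;
  part_ok : forall t, interval_partition n (part t);
  part_size : forall t, (size (part t) <= m)%N;
  pos_step : forall t b i, b \in part t -> (b.1 <= i <= b.2)%N ->
    (1 - rho) * pos t b.1 + rho * pos t (minn i.+1 b.2) <= pos t.+1 i /\
    pos t.+1 i <= rho * pos t (maxn i.-1 b.1) + (1 - rho) * pos t b.2
}.

Definition init01 (R : realType) (n m : nat) (rho : R)
  (S : twist_system n m rho) : Prop :=
  forall i, (i < n)%N -> 0 <= pos S 0 i <= 1.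

Definition energy1 (R : realType) (n m : nat) (rho : R)
  (S : twist_system n m rho) : \bar R :=
  (\sum_(0 <= t <oo) (\sum_(b <- part S t) (pos S t b.2 - pos S t b.1))%:E)%E.

(* K_t(z) = sum_{k=1}^n (x_{v(k)}(t) - x_k(t)) z^k, with 0-based index i = k-1 *)
Definition Kt (R : realType) (n m : nat) (rho : R)
  (S : twist_system n m rho) (t : nat) (z : R) : R :=
  \sum_(i < n) (pos S t (vblk (part S t) i) - pos S t i) * z ^+ i.+1.

Definition Kser (R : realType) (n m : nat) (rho : R)
  (S : twist_system n m rho) (z : R) : \bar R :=
  (\sum_(0 <= t <oo) (Kt S t z)%:E)%E.

Definition ETW (R : realType) (n m : nat) (rho : R) : \bar R :=
  ereal_sup [set e | exists S : twist_system n m rho, init01 S /\ e = energy1 S].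

Definition Ksup (R : realType) (n m : nat) (rho : R) (z : R) : \bar R :=
  ereal_sup [set e | exists S : twist_system n m rho, init01 S /\ e = Kser S z].

From HB Require Import structures.
From mathcomp Require Import all_boot all_order all_algebra.
From mathcomp Require Import all_classical all_reals all_analysis.
From mathcomp Require Import zify ring lra.
Set Implicit Arguments. Unset Strict Implicit.
Import Order.TTheory GRing.Theory Num.Theory.
Local Open Scope ring_scope.

(* Reflecting the line, [x_i |-> 1 - x_(n-1-i)] with the reversed block
   partition, gives again a twist system with initial positions in [0,1]; its
   [K_t(z)] weighs the right gaps [x_k - x_(u(k))] by [z^(n-k)] where the
   original weighs the left gaps [x_(v(k)) - x_k] by [z^(k+1)].  In a block
   [[u,v]] some index [r] has both exponents at least [nu] (or a vanishing
   gap), so as [z >= 1] the block contributes at least [(x_v - x_u) z^nu] to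
   [K_t(z) + K'_t(z)].  Summing over blocks and times bounds the 1-energy by
   [z^-nu (K(z) + K'(z)) <= 2 z^-nu sup K(z)]. *)

Definition block_indices (s : seq (nat * nat)) : seq nat :=
  flatten [seq iota b.1 (b.2.+1 - b.1) | b <- s].

Lemma mem_block_indices s (b : nat * nat) i :
  b \in s -> (b.1 <= i <= b.2)%N -> i \in block_indices s.
Proof.
move=> bs hi; apply/flattenP; exists (iota b.1 (b.2.+1 - b.1)).
  by apply/mapP; exists b.
by rewrite mem_iota; lia.
Qed.

Lemma blk_of_cover s a N (b : nat * nat) i :
  all (fun b => b.1 <= b.2)%N s -> block_indices s = iota a N ->
  b \in s -> (b.1 <= i <= b.2)%N -> blk s i = b.
Proof.
elim: s a N => [//|c s IH] a N /= /andP[hc hall] hcover.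
set L := (c.2.+1 - c.1)%N in hcover.
have hL : (L <= N)%N.
  by have := congr1 size hcover; rewrite size_cat !size_iota => <-; rewrite leq_addr.
move: hcover; rewrite [N](_ : N = L + (N - L))%N; last by lia.
rewrite iotaD => /eqP; rewrite eqseq_cat ?size_iota // => /andP[/eqP hc_iota /eqP hs].
have c1_eq : c.1 = a.
  have : c.1 \in iota a L by rewrite -hc_iota mem_iota; lia.
  have : a \in iota c.1 L by rewrite hc_iota mem_iota; lia.
  by rewrite !mem_iota; lia.
rewrite in_cons => /orP[/eqP -> hi | bs hi]; first by rewrite /blk /= hi.
have hb1 : (a + L <= b.1)%N.
  have : b.1 \in iota (a + L) (N - L).
    rewrite -hs; apply: (mem_block_indices bs).
    by move: hall => /allP /(_ b bs) /=; lia.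
  by rewrite mem_iota => /andP[].
rewrite -(IH _ _ hall hs bs hi) /blk /=.
by have -> : (c.1 <= i <= c.2)%N = false by lia.
Qed.

Section IntervalPartition.
Variables (n : nat) (s : seq (nat * nat)).
Hypothesis s_ok : interval_partition n s.

Lemma block_indices_cover : block_indices s = iota 0 n.
Proof. by case/andP: s_ok => _ /eqP. Qed.

Lemma block_bounds (b : nat * nat) : b \in s -> (b.1 <= b.2 < n)%N.
Proof.
case: b => u v bs; have /= huv := allP (proj1 (andP s_ok)) _ bs.
have : v \in iota 0 n by rewrite -block_indices_cover (mem_block_indices bs) //=; lia.
by rewrite mem_iota /=; lia.
Qed.

Lemma blk_in_block (b : nat * nat) i : b \in s -> (b.1 <= i <= b.2)%N -> blk s i = b.
Proof. exact: blk_of_cover (proj1 (andP s_ok)) block_indices_cover. Qed.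

Lemma blk_spec i : (i < n)%N ->
  [/\ blk s i \in s, ((blk s i).1 <= i <= (blk s i).2)%N & ((blk s i).2 < n)%N].
Proof.
move=> hi; have : i \in block_indices s by rewrite block_indices_cover mem_iota.
case/flattenP => _ /mapP [[u v] bs ->]; rewrite mem_iota /= => hui.
rewrite (@blk_in_block (u, v)) //=; last by lia.
by have /= := block_bounds bs; split => //; lia.
Qed.

End IntervalPartition.

Lemma rev_map_complement_iota n a L : (a + L <= n)%N ->
  rev [seq n.-1 - k | k <- iota a L]%N = iota (n - (a + L)) L.
Proof.
elim: L a => [//|L IH] a h.
rewrite -[in RHS](addn1 L) iotaD cats1 /= rev_cons IH; last by lia.
by congr (rcons (iota _ _) _); lia.
Qed.

Definition flip_partition (n : nat) (s : seq (nat * nat)) : seq (nat * nat) :=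
  rev [seq ((n.-1 - b.2)%N, (n.-1 - b.1)%N) | b <- s].

Lemma flip_partition_ok n s :
  interval_partition n s -> interval_partition n (flip_partition n s).
Proof.
move=> s_ok; apply/andP; split.
  apply/allP => b'; rewrite /flip_partition mem_rev => /mapP [b bs ->] /=.
  by have /= := block_bounds s_ok bs; lia.
apply/eqP; rewrite /flip_partition map_rev -map_comp.
rewrite (eq_in_map _ (fun b => rev [seq n.-1 - k | k <- iota b.1 (b.2.+1 - b.1)]%N) _).1;
  last first.
  move=> [u v] bs /=; have /= huv := block_bounds s_ok bs.
  by rewrite rev_map_complement_iota; [congr iota|]; lia.
rewrite (map_comp rev) -rev_flatten (map_comp (map _)) -map_flatten.
by rewrite [flatten _](block_indices_cover s_ok) rev_map_complement_iota //; congr iota; lia.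
Qed.

Lemma vblk_flip n s i : interval_partition n s -> (i < n)%N ->
  vblk (flip_partition n s) i = (n.-1 - ublk s (n.-1 - i))%N.
Proof.
move=> s_ok hi; have hj : (n.-1 - i < n)%N by lia.
have [bs hb _] := blk_spec s_ok hj; set b := blk s _ in bs hb *.
have b_flip : ((n.-1 - b.2)%N, (n.-1 - b.1)%N) \in flip_partition n s.
  by rewrite mem_rev; apply: map_f.
by rewrite /vblk (blk_in_block (flip_partition_ok s_ok) b_flip) //=; lia.
Qed.

Section BlockEstimate.
Variables (R : realType) (x : nat -> R) (z : R) (n u v : nat).
Hypotheses (z_ge1 : 1 <= z) (uv : (u <= v)%N).
Hypothesis x_monotone : forall i j, (u <= i <= j)%N -> (j <= v)%N -> x i <= x j.

Lemma gap_le_split r : (u <= r <= v)%N ->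
  (r = v \/ (uphalf n <= r.+1)%N) -> (r = u \/ (uphalf n <= n - r)%N) ->
  (x v - x u) * z ^+ uphalf n
    <= (x v - x r) * z ^+ r.+1 + (x r - x u) * z ^+ (n - r).
Proof.
move=> hr hleft hright.
rewrite (_ : x v - x u = (x v - x r) + (x r - x u)); last by ring.
rewrite mulrDl; apply: lerD.
- case: hleft => [->|hexp]; first by rewrite !subrr !mul0r.
  by rewrite ler_wpM2l ?ler_weXn2l // subr_ge0 x_monotone //; lia.
- case: hright => [->|hexp]; first by rewrite !subrr !mul0r.
  by rewrite ler_wpM2l ?ler_weXn2l // subr_ge0 x_monotone //; lia.
Qed.

Lemma gap_le_block_sum :
  (x v - x u) * z ^+ uphalf n
    <= \sum_(u <= k < v.+1) ((x v - x k) * z ^+ k.+1 + (x k - x u) * z ^+ (n - k)).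
Proof.
have [r hr hsplit] : exists2 r, (u <= r <= v)%N &
    (x v - x u) * z ^+ uphalf n
      <= (x v - x r) * z ^+ r.+1 + (x r - x u) * z ^+ (n - r).
  have [h1|h1] := leqP (uphalf n) u.+1.
    by exists u; [lia | apply: gap_le_split; [lia | right; lia | left]].
  have [h2|h2] := leqP (uphalf n) (n - v).
    by exists v; [lia | apply: gap_le_split; [lia | left | right]].
  by exists (uphalf n).-1; [lia | apply: gap_le_split; [lia | right; lia | right; lia]].
apply: le_trans hsplit _.
have r_in : r \in index_iota u v.+1 by rewrite mem_index_iota; lia.
rewrite (bigD1_seq r r_in (iota_uniq _ _)) /= lerDl big_seq_cond.
apply: sumr_ge0 => k /andP[]; rewrite mem_index_iota => hk _.
have z0 : 0 <= z := le_trans ler01 z_ge1.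
by rewrite addr_ge0 // mulr_ge0 ?exprn_ge0 ?subr_ge0 ?x_monotone //; lia.
Qed.

End BlockEstimate.

Section Mirror.
Variables (R : realType) (n m : nat) (rho : R) (S : twist_system n m rho).

Definition mirror_pos t i := 1 - pos S t (n.-1 - i)%N.
Definition mirror_part t := flip_partition n (part S t).

Lemma mirror_pos_sorted t i : (i.+1 < n)%N -> mirror_pos t i <= mirror_pos t i.+1.
Proof.
move=> hi; rewrite /mirror_pos lerD2l lerN2.
have := @pos_sorted _ _ _ _ S t (n.-1 - i.+1)%N.
by rewrite (_ : (n.-1 - i.+1).+1 = n.-1 - i)%N; [apply; lia | lia].
Qed.

Lemma mirror_part_ok t : interval_partition n (mirror_part t).
Proof. exact: flip_partition_ok (part_ok S t). Qed.

Lemma mirror_part_size t : (size (mirror_part t) <= m)%N.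
Proof. by rewrite size_rev size_map part_size. Qed.

Lemma mirror_pos_step t b i : b \in mirror_part t -> (b.1 <= i <= b.2)%N ->
  (1 - rho) * mirror_pos t b.1 + rho * mirror_pos t (minn i.+1 b.2)
    <= mirror_pos t.+1 i /\
  mirror_pos t.+1 i
    <= rho * mirror_pos t (maxn i.-1 b.1) + (1 - rho) * mirror_pos t b.2.
Proof.
rewrite /mirror_part /flip_partition mem_rev => /mapP [[u v] bs ->] /= hi.
have /= huv := block_bounds (part_ok S t) bs.
have [|lo up] := pos_step bs (_ : u <= n.-1 - i <= v)%N; first by lia.
rewrite /mirror_pos (_ : n.-1 - (n.-1 - v) = v)%N; last by lia.
rewrite (_ : n.-1 - (n.-1 - u) = u)%N; last by lia.
rewrite (_ : n.-1 - minn i.+1 (n.-1 - u) = maxn (n.-1 - i).-1 u)%N; last by lia.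
rewrite (_ : n.-1 - maxn i.-1 (n.-1 - v) = minn (n.-1 - i).+1 v)%N; last by lia.
by split; lra.
Qed.

Definition mirror : twist_system n m rho :=
  TwistSystem mirror_pos_sorted mirror_part_ok mirror_part_size mirror_pos_step.

Lemma init01_mirror : init01 S -> init01 mirror.
Proof.
move=> h01 i hi; rewrite /= /mirror_pos.
have /andP[lo up] : 0 <= pos S 0 (n.-1 - i) <= 1 by apply: h01; lia.
by apply/andP; split; lra.
Qed.

End Mirror.

Section Gaps.
Variables (R : realType) (n m : nat) (rho : R) (S : twist_system n m rho).

Lemma pos_monotone t i j : (i <= j < n)%N -> pos S t i <= pos S t j.
Proof.
elim: j => [|j IH] hij; first by rewrite (_ : i = 0%N) //; lia.
have [hj|hj] := leqP i j; last by rewrite (_ : i = j.+1) //; lia.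
by apply: le_trans (IH _) (pos_sorted S t _); lia.
Qed.

Lemma Kt_ge0 t z : 0 <= z -> 0 <= Kt S t z.
Proof.
move=> z0; apply: sumr_ge0 => i _; rewrite mulr_ge0 ?exprn_ge0 // subr_ge0.
have [_ hi hv] := blk_spec (part_ok S t) (ltn_ord i).
by apply: pos_monotone; rewrite /vblk; lia.
Qed.

Lemma Kser_ge0 z : 0 <= z -> (0 <= Kser S z)%E.
Proof. by move=> z0; apply: nneseries_ge0 => t _ _; rewrite lee_fin Kt_ge0. Qed.

Lemma Kt_mirror t z : Kt (mirror S) t z =
  \sum_(i < n) (pos S t i - pos S t (ublk (part S t) i)) * z ^+ (n - i).
Proof.
rewrite /Kt (reindex_inj rev_ord_inj); apply: eq_bigr => i _ /=.
have hi := ltn_ord i; have [_ hu _] := blk_spec (part_ok S t) hi.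
rewrite /mirror_pos /mirror_part vblk_flip ?part_ok //; last by lia.
rewrite (_ : n.-1 - (n - i.+1) = i)%N; last by lia.
rewrite (_ : n.-1 - (n.-1 - ublk (part S t) i) = ublk (part S t) i)%N;
  last by rewrite /ublk; lia.
by rewrite (_ : (n - i.+1).+1 = n - i)%N; [congr (_ * _); lra | lia].
Qed.


End Gaps.

Section Energy.
Variables (R : realType) (n m : nat) (rho : R) (S : twist_system n m rho).

Lemma block_gaps_le_Kt t z : 1 <= z ->
  (\sum_(b <- part S t) (pos S t b.2 - pos S t b.1)) * z ^+ uphalf n
    <= Kt S t z + Kt (mirror S) t z.
Proof.
move=> z_ge1; have s_ok := part_ok S t.
set s := part S t; set x := pos S t.
pose g i := (x (vblk s i) - x i) * z ^+ i.+1 + (x i - x (ublk s i)) * z ^+ (n - i).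
rewrite Kt_mirror /Kt -big_split /= -(big_mkord xpredT g).
rewrite /index_iota subn0 -(block_indices_cover s_ok) big_flatten big_map mulr_suml.
rewrite big_seq [leRHS]big_seq; apply: ler_sum => -[u v] bs /=.
have /= huv := block_bounds s_ok bs.
rewrite (@eq_big_nat _ _ _ u v.+1 _
  (fun k => (x v - x k) * z ^+ k.+1 + (x k - x u) * z ^+ (n - k))) => [|k hk].
  by apply: gap_le_block_sum; [|lia|move=> i j hij hj; apply: pos_monotone; lia].
by rewrite /g /vblk /ublk (blk_in_block s_ok bs) //; lia.
Qed.

Lemma energy1_le_Kser z : 1 <= z ->
  (energy1 S <= (z ^- uphalf n)%:E * (Kser S z + Kser (mirror S) z))%E.
Proof.
move=> z_ge1; have z0 : 0 <= z by lra.
have zn_gt0 : 0 < z ^+ uphalf n by rewrite exprn_gt0 //; lra.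
have Kt_ge0E S' t : (0 <= (Kt S' t z)%:E)%E by rewrite lee_fin Kt_ge0.
rewrite /energy1 /Kser -nneseriesD; last 2 first.
- by move=> t _ _; apply: Kt_ge0E.
- by move=> t _ _; apply: Kt_ge0E.
rewrite -nneseriesZl => [|t _]; last by rewrite adde_ge0.
apply: lee_nneseries => [t _ _|t _].
  rewrite lee_fin big_seq sumr_ge0 // => -[u v] bs.
  by rewrite subr_ge0 pos_monotone //; have := block_bounds (part_ok S t) bs; lia.
rewrite -EFinD -EFinM lee_fin -(ler_pM2r zn_gt0) mulrAC mulVf ?gt_eqF // mul1r.
exact: block_gaps_le_Kt.
Qed.

End Energy.

Theorem lemma3 (R : realType) (n m : nat) (rho z : R) :
  0 < rho -> rho <= 1 / 2 -> 1 <= z ->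
  (ETW n m rho <= (2 * z ^- (uphalf n))%:E * Ksup n m rho z)%E.
Proof.
move=> _ _ z_ge1; have c_ge0 : 0 <= z ^- uphalf n.
  by rewrite invr_ge0 exprn_ge0 //; lra.
apply: ge_ereal_sup => _ [S [S01 ->]].
have KS : (Kser S z <= Ksup n m rho z)%E by apply: ereal_sup_ubound; exists S.
have KmS : (Kser (mirror S) z <= Ksup n m rho z)%E.
  by apply: ereal_sup_ubound; exists (mirror S); split => //; exact: init01_mirror.
have K_ge0 : (0 <= Ksup n m rho z)%E.
  by apply: le_trans KS; rewrite Kser_ge0 //; lra.
apply: le_trans (energy1_le_Kser S z_ge1) _.
apply: le_trans (lee_wpmul2l _ (leeD KS KmS)) _; first by rewrite lee_fin.
by rewrite ge0_muleDr // -ge0_muleDl ?lee_fin // -EFinD mulr2n mulrDl mul1r.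
Qed.
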